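(* Let $w:2^{[m]}\to\mathbb{R}_{\ge0}$ be additive, and let $\mathcal P=(P_1,\dots,P_n)$ and $\mathcal Q=(Q_1,\dots,Q_n)$ be two $n$-partitions of $[m]$ that are both $\mathrm{EF1}$ with respect to $w$. Then the sequence $(w(P_i))_{i=1}^n$ $\tfrac12$-majorizes the sequence $(w(Q_i))_{i=1}^n$.
   Context: $w$ additive means $w(S)=\sum_{g\in S}w(g)$. An $n$-partition $(S_1,\dots,S_n)$ of $[m]$ (parts may be empty) is $\mathrm{EF1}$ with respect to $w$ if for all $i,j\in[n]$ with $S_j\ne\emptyset$ there is $g\in S_j$ with $w(S_i)\ge w(S_j)-w(g)$. For $\beta\in\mathbb{R}_{\ge0}$, a sequence $(x_i)_{i=1}^n$ $\beta$-majorizes $(y_i)_{i=1}^n$ if $\sum_{i=1}^k x_{(i)}\ge\beta\sum_{i=1}^k y_{(i)}$ for all $1\le k\le n-1$ and $\sum_{i=1}^n x_i=\sum_{i=1}^n y_i$, where $x_{(i)}$, $y_{(i)}$ denote the $i$-th largest entries. *)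

From HB Require Import structures.
From mathcomp Require Import all_boot all_order all_algebra.
Set Implicit Arguments. Unset Strict Implicit. Unset Printing Implicit Defensive.
Import Order.TTheory GRing.Theory Num.Theory.
Local Open Scope ring_scope.

(* Additive valuation induced by per-good weights w : 'I_m -> R. *)
Definition wset (R : realFieldType) (m : nat) (w : 'I_m -> R) (S : {set 'I_m}) : R :=
  \sum_(g in S) w g.

Definition is_npartition (m n : nat) (S : 'I_n -> {set 'I_m}) : Prop :=
  (forall g : 'I_m, exists i : 'I_n, g \in S i) /\
  (forall (i j : 'I_n) (g : 'I_m), g \in S i -> g \in S j -> i = j).

Definition EF1 (R : realFieldType) (m n : nat) (w : 'I_m -> R)
    (S : 'I_n -> {set 'I_m}) : Prop :=
  forall i j : 'I_n, S j != set0 ->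
    exists2 g, g \in S j & wset w (S j) - w g <= wset w (S i).

Definition sorted_desc (R : realFieldType) (n : nat) (x : 'I_n -> R) : seq R :=
  sort (fun a b : R => b <= a) [seq x i | i : 'I_n].

Definition topk_sum (R : realFieldType) (n : nat) (x : 'I_n -> R) (k : nat) : R :=
  \sum_(a <- take k (sorted_desc x)) a.

Definition beta_majorizes (R : realFieldType) (n : nat) (beta : R)
    (x y : 'I_n -> R) : Prop :=
  (forall k : nat, (1 <= k <= n.-1)%N -> beta * topk_sum y k <= topk_sum x k) /\
  \sum_(i < n) x i = \sum_(i < n) y i.

From HB Require Import structures.
From mathcomp Require Import all_boot all_order all_algebra.
From mathcomp Require Import zify lra.
Set Implicit Arguments. Unset Strict Implicit. Unset Printing Implicit Defensive.
Import Order.TTheory GRing.Theory Num.Theory.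
Local Open Scope ring_scope.

(* Write p_i = w(P_i), q_i = w(Q_i), fix k <= n and let J be a
   set of k agents carrying the k largest values of q.  Let i0 be an agent
   with minimal q.  By EF1 of Q, for every nonempty Q_j there is a good
   g_j in Q_j with q_j - w(g_j) <= q_i0; hence
       sum_(j in J) q_j <= k * q_i0 + sum_(g in G) w(g)
   for a set G of at most k goods (distinct since Q is a partition).
   - The goods of G lie in at most k bundles of P, so w(G) <= top_k(p).
   - q_i0 is at most the mean of q, which equals the mean of p, and the
     mean of p is at most the mean of its k largest entries: k q_i0 <= top_k(p).
   Hence top_k(q) <= 2 top_k(p).  The totals agree since both families
   partition the goods. *)

Lemma topk_sum_witness (R : realFieldType) (n : nat) (x : 'I_n -> R) (k : nat) :
  (k <= n)%N ->
  exists T : {set 'I_n}, [/\ topk_sum x k = \sum_(i in T) x i, #|T| = k &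
     forall a b, a \notin T -> b \in T -> x a <= x b].
Proof.
move=> kn.
pose ge_x := relpre x (fun a b : R => b <= a).
pose r := sort ge_x (enum 'I_n).
have perm_r : perm_eq r (enum 'I_n) by rewrite perm_sort.
have uniq_r : uniq r by rewrite (perm_uniq perm_r) enum_uniq.
have size_r : size r = n by rewrite (perm_size perm_r) size_enum_ord.
have sorted_r : sorted ge_x r by apply: sort_sorted => a b /=; apply: le_total.
have trans_ge : transitive ge_x by move=> y z t /= h1 h2; apply: le_trans h2 h1.
exists [set i in take k r]; split.
- rewrite /topk_sum /sorted_desc sort_map -map_take big_map.
  rewrite big_uniq ?take_uniq //.
  by apply: eq_bigl => i; rewrite inE.
- by rewrite cardsE (card_uniqP _) ?take_uniq // size_takel ?size_r.
- move=> a b; rewrite !inE => a_out b_in.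
  have a_drop : a \in drop k r.
    have : a \in r by rewrite (perm_mem perm_r) mem_enum.
    by rewrite -{1}(cat_take_drop k r) mem_cat (negbTE a_out).
  move: sorted_r; rewrite (sorted_pairwise trans_ge) -(cat_take_drop k r).
  by rewrite pairwise_cat => /and3P [/allrelP dom _ _]; exact: dom b a b_in a_drop.
Qed.

Lemma sum_dominated (R : realFieldType) (n : nat) (x : 'I_n -> R)
    (A B : {set 'I_n}) :
  (forall a b, a \in A -> b \in B -> x a <= x b) ->
  #|B|%:R * \sum_(i in A) x i <= #|A|%:R * \sum_(i in B) x i.
Proof.
move=> dom.
have expand (C D : {set 'I_n}) :
    #|D|%:R * \sum_(i in C) x i = \sum_(d in D) \sum_(c in C) x c.
  by rewrite sumr_const mulr_natl.
rewrite !expand [X in _ <= X]exchange_big /=.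
by apply: ler_sum => b bB; apply: ler_sum => a aA; apply: dom.
Qed.

Lemma sum_le_topk (R : realFieldType) (n : nat) (x : 'I_n -> R) (k : nat)
    (I : {set 'I_n}) :
  (forall i, 0 <= x i) -> (k <= n)%N -> (#|I| <= k)%N ->
  \sum_(i in I) x i <= topk_sum x k.
Proof.
move=> x_ge0 kn cardI.
have [T [-> cardT domT]] := topk_sum_witness x kn.
rewrite (big_setID (A := I) T) (big_setID (A := T) I) /= setIC lerD2l.
set A := I :\: T; set B := T :\: I.
have cardAB : (#|A| <= #|B|)%N.
  have h1 := cardsID T I; have h2 := cardsID I T.
  rewrite setIC in h2; rewrite -/A -/B in h1 h2; lia.
have [B0 | B_gt0] := posnP #|B|.
  have /eqP : #|A| = 0%N by lia.
  by rewrite cards_eq0 => /eqP ->; rewrite big_set0 sumr_ge0.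
have dom : #|B|%:R * \sum_(i in A) x i <= #|A|%:R * \sum_(i in B) x i.
  by apply: sum_dominated => a b; rewrite !inE => /andP [aT _] /andP [_ bT]; exact: domT.
rewrite -(@ler_pM2l _ #|B|%:R) ?ltr0n //; apply: le_trans dom _.
by apply: ler_wpM2r; [apply: sumr_ge0 | rewrite ler_nat].
Qed.

Lemma mean_le_topk (R : realFieldType) (n : nat) (x : 'I_n -> R) (k : nat) :
  (k <= n)%N -> k%:R * \sum_i x i <= n%:R * topk_sum x k.
Proof.
move=> kn.
have [T [-> cardT domT]] := topk_sum_witness x kn.
have dom : #|T|%:R * \sum_(i in ~: T) x i <= #|~: T|%:R * \sum_(i in T) x i.
  by apply: sum_dominated => a b; rewrite inE; apply: domT.
have cardC : #|~: T| = (n - k)%N by have := cardsC T; rewrite card_ord cardT; lia.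
rewrite cardC cardT natrB // in dom.
rewrite (bigID (mem T)) /=.
have -> : \sum_(i | i \notin T) x i = \sum_(i in ~: T) x i.
  by apply: eq_bigl => i; rewrite inE.
lra.
Qed.

Lemma min_le_topk (R : realFieldType) (n : nat) (x y : 'I_n -> R) (i0 : 'I_n)
    (k : nat) :
  (k <= n)%N -> (forall i, y i0 <= y i) -> \sum_i x i = \sum_i y i ->
  k%:R * y i0 <= topk_sum x k.
Proof.
move=> kn y_min sum_xy.
have n_gt0 : (0 < n)%N by have := ltn_ord i0; lia.
have min_le_mean : n%:R * y i0 <= \sum_i x i.
  rewrite sum_xy; apply: le_trans (_ : \sum_(i < n) y i0 <= _).
    by rewrite sumr_const card_ord mulr_natl.
  by apply: ler_sum => i _.
rewrite -(@ler_pM2l _ n%:R) ?ltr0n // mulrCA.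
apply: le_trans (mean_le_topk x kn).
by apply: ler_wpM2l.
Qed.

Lemma wset_partition_sum (R : realFieldType) (m n : nat) (w : 'I_m -> R)
    (S : 'I_n -> {set 'I_m}) :
  is_npartition S -> \sum_i wset w (S i) = \sum_g w g.
Proof.
case=> cover disj; rewrite /wset.
under eq_bigr => i _ do rewrite big_mkcond.
rewrite exchange_big /=; apply: eq_bigr => g _.
have [i gi] := cover g.
rewrite (bigD1 i) //= gi big1 ?addr0 // => j ji.
case: ifP => // gj.
by rewrite (disj _ _ _ gj gi) eqxx in ji.
Qed.

(* A set G of nonnegatively valued goods meets at most #|G| bundles of a
   covering family P, so its value is at most the top-k bundle values. *)
Lemma goods_le_topk (R : realFieldType) (m n : nat) (w : 'I_m -> R)
    (P : 'I_n -> {set 'I_m}) (G : {set 'I_m}) (k : nat) :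
  (forall g, 0 <= w g) -> (forall g, exists i, g \in P i) ->
  (#|G| <= k)%N -> (k <= n)%N ->
  \sum_(g in G) w g <= topk_sum (fun i => wset w (P i)) k.
Proof.
move=> w_ge0 cover cardG kn.
have [owner ownerP] : exists owner : 'I_m -> 'I_n, forall g, g \in P (owner g).
  exact: (fin_all_exists cover).
pose I := owner @: G.
have value_in_bundles : \sum_(g in G) w g <= \sum_(i in I) wset w (P i).
  apply: le_trans (_ : \sum_(g in G) \sum_(i in I | g \in P i) w g <= _).
    apply: ler_sum => g gG; rewrite (bigD1 (owner g)) /= ?imset_f ?ownerP //.
    by rewrite lerDl sumr_ge0.
  rewrite (exchange_big_dep (mem I)) /=; last by move=> g i _ /andP [].
  apply: ler_sum => i iI; rewrite /wset big_mkcond [X in _ <= X]big_mkcond /=.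
  by apply: ler_sum => g _; rewrite iI; case: (g \in G); case: (g \in P i).
apply: le_trans value_in_bundles (sum_le_topk _ kn _).
- by move=> i; apply: sumr_ge0.
- exact: leq_trans (leq_imset_card _ _) cardG.
Qed.

Lemma EF1_bound_by_witnesses (R : realFieldType) (m n : nat) (w : 'I_m -> R)
    (Q : 'I_n -> {set 'I_m}) (i0 : 'I_n) (J : {set 'I_n}) :
  (forall g, 0 <= w g) -> is_npartition Q -> EF1 w Q ->
  exists2 G : {set 'I_m}, (#|G| <= #|J|)%N &
    \sum_(j in J) wset w (Q j) <= #|J|%:R * wset w (Q i0) + \sum_(g in G) w g.
Proof.
move=> w_ge0 [_ disjQ] ef1.
have q0_ge0 : 0 <= wset w (Q i0) by apply: sumr_ge0.
have [m0 | m_gt0] := posnP m.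
  exists set0; first by rewrite cards0.
  have no_goods (S : {set 'I_m}) : wset w S = 0.
    by apply: big1 => g _; have := ltn_ord g; move: (nat_of_ord g) => a; rewrite m0.
  rewrite big_set0 addr0 big1 ?mulr_ge0 // => j _; exact: no_goods.
have witness (j : 'I_n) : exists g : 'I_m, Q j != set0 ->
    g \in Q j /\ wset w (Q j) - w g <= wset w (Q i0).
  have [nonempty | _] := boolP (Q j != set0); last by exists (Ordinal m_gt0).
  by have [g gQ le_g] := ef1 i0 j nonempty; exists g.
have [wit witP] := fin_all_exists witness.
pose J' := [set j in J | Q j != set0].
exists (wit @: J').
  apply: leq_trans (leq_imset_card _ _) (subset_leq_card _).
  by apply/subsetP => j; rewrite inE => /andP [].
have wit_inj : {in J' &, injective wit}.
  move=> j j' /setIdP [_ nj] /setIdP [_ nj'] same_wit.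
  have [in_j _] := witP j nj; have [in_j' _] := witP j' nj'.
  by rewrite same_wit in in_j; exact: disjQ _ _ _ in_j in_j'.
rewrite big_imset //=.
have -> : \sum_(j in J') w (wit j) = \sum_(j in J | Q j != set0) w (wit j).
  by apply: eq_bigl => j; rewrite inE.
rewrite big_mkcondr mulr_natl -sumr_const -big_split /=.
apply: ler_sum => j _; case: ifP => [nonempty | /negbFE/eqP empty].
  by have [_ le_wit] := witP j nonempty; lra.
by rewrite empty /wset big_set0 addr0.
Qed.

Theorem lemma2 (R : realFieldType) (m n : nat) (w : 'I_m -> R)
    (P Q : 'I_n -> {set 'I_m}) :
  (forall g, 0 <= w g) ->
  is_npartition P -> is_npartition Q ->
  EF1 w P -> EF1 w Q ->
  beta_majorizes (2^-1) (fun i => wset w (P i)) (fun i => wset w (Q i)).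
Proof.
move=> w_ge0 partP partQ _ ef1Q.
set p := fun i => wset w (P i); set q := fun i => wset w (Q i).
have same_total : \sum_i p i = \sum_i q i by rewrite /p /q !wset_partition_sum.
split=> // k /andP [k_ge1 k_le]; have kn : (k <= n)%N by lia.
have n_gt0 : (0 < n)%N by lia.
have [i0 q_min] : exists i0, forall i, q i0 <= q i.
  exists [arg min_(i < Ordinal n_gt0) q i]%O.
  by case: arg_minP => // j _ H i; apply: H.
have [J [topJ cardJ _]] := topk_sum_witness q kn.
have [G cardG boundJ] := EF1_bound_by_witnesses i0 J w_ge0 partQ ef1Q.
rewrite cardJ in cardG boundJ.
have goods := goods_le_topk w_ge0 partP.1 cardG kn.
have mins := min_le_topk kn q_min same_total.
move: mins; rewrite topJ /p /q /= => mins; lra.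
Qed.
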